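(* Let $(P,F)$ be a convex Fuchsian polyhedron in $\mathbb{H}^3$ with invariant plane $\Pi$, and let $Z$ be a Fuchsian deformation of $(P,F)$. Decompose $Z=Z_v+Z_h$ into its vertical and horizontal components. Then $Z_v$ is invariant under $F$: for all $f\in F$ and $x\in P$, $Z_v(f x)=df\,(Z_v(x))$.
   Context: A convex Fuchsian polyhedron is a pair $(P,F)$ where $P$ is a convex polyhedral surface in $\mathbb{H}^3$ (boundary of a locally finite intersection of half-spaces) and $F$ is a discrete group of orientation-preserving isometries leaving invariant a totally geodesic plane $\Pi$, acting cocompactly without fixed points on $\Pi$, with $F(P)=P$ and $F$ acting freely on $P$. An infinitesimal isometric deformation of $P$ is a triangulation of the faces of $P$ with no new vertices plus a Killing field of $\mathbb{H}^3$ on each triangle, coinciding on common edges; it gives a vector field $Z$ on $P$. A Fuchsian Killing field is the extension of a Killing field $K$ of $\Pi$ defined by: at $x$ at distance $d$ from $\Pi$, with $p_d$ the orthogonal projection onto $\Pi$ of the equidistant surface at distance $d$ through $x$, its value is $(dp_d)^{-1}(K(p_d(x)))$. A Fuchsian deformation is an infinitesimal isometric deformation $Z$ such that for each $f\in F$ there is a Fuchsian Killing field $\vec f$ with $Z(fy)=df(\vec f(y)+Z(y))$ for all $y\in P$. At $x\in P$ the vertical direction is the tangent direction at $x$ of the geodesic through $x$ orthogonal to $\Pi$; horizontal directions are those orthogonal to it; $Z_v$ and $Z_h$ are the corresponding orthogonal components of $Z$. *)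

(* Model: hyperboloid model of H^3 in Minkowski space R^{3,1},
   vectors are column vectors 'cV[R]_4 (coordinate 3 is the time coordinate). *)
From HB Require Import structures.
From mathcomp Require Import all_boot all_order all_algebra.
From mathcomp Require Import all_classical all_reals.
Set Implicit Arguments.
Unset Strict Implicit.
Unset Printing Implicit Defensive.
Import Order.TTheory GRing.Theory Num.Theory.
Local Open Scope ring_scope.
Local Open Scope classical_set_scope.

Section Hyperbolic.
Variable R : realType.

Definition vec := 'cV[R]_4.
Definition mat := 'M[R]_4.

Definition tc : 'I_4 := @Ordinal 4 3 isT.

Definition Jmink : mat := diag_mx (\row_(i < 4) (if i == tc then -1 else 1 : R)).
Definition mink (u v : vec) : R := (u^T *m Jmink *m v) 0 0.

Definition H3 : set vec := [set x | mink x x = -1 /\ 0 < x tc 0].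

(* squared Euclidean distance in R^4 (defines the usual topology on H^3) *)
Definition d2 (x y : vec) : R := \sum_(i < 4) (x i 0 - y i 0) ^+ 2.

(* Orientation-preserving isometries of H^3: elements of SO^+(3,1);
   the differential df of such an isometry at any point is v |-> A v. *)
Definition isom_plus (A : mat) : Prop :=
  [/\ A^T *m Jmink *m A = Jmink, 0 < A tc tc & \det A = 1].

Definition act (A : mat) (S : set vec) : set vec := (fun x => A *m x) @` S.

(* Killing fields of H^3 : x |-> X x with X in so(3,1). *)
Definition skew (X : mat) : Prop := X^T *m Jmink + Jmink *m X = 0.

(* totally geodesic plane with unit spacelike normal n *)
Definition Pi (n : vec) : set vec := [set x | H3 x /\ mink x n = 0].

(* Heine-Borel: compact subsets of H^3 (in R^4) = closed and bounded ones *)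
Definition compactH (K : set vec) : Prop :=
  K `<=` H3 /\
  (exists B : R, forall x, K x -> forall i, `|x i 0| <= B) /\
  (forall x, H3 x -> (forall r, 0 < r -> exists y, K y /\ d2 x y < r) -> K x).

Definition fuchsian_group (n : vec) (F : set mat) : Prop :=
  F 1%:M /\
  (forall g h, F g -> F h -> F (g *m h)) /\
  (forall g, F g -> F (invmx g)) /\
  (forall g, F g -> isom_plus g) /\
  (forall g, F g -> act g (Pi n) = Pi n) /\
  (* discreteness *)
  (exists eps : R, 0 < eps /\ forall g, F g -> g <> 1%:M ->
      exists i j, eps <= `|g i j - (1%:M : mat) i j|) /\
  (* cocompact action on Pi n *)
  (exists K, K `<=` Pi n /\ compactH K /\
      forall x, Pi n x -> exists g y, F g /\ K y /\ x = g *m y) /\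
  (forall g x, F g -> Pi n x -> g *m x = x -> g = 1%:M).

Definition halfspace (m : vec) : set vec := [set x | H3 x /\ mink x m <= 0].
Definition hplane (m : vec) : set vec := [set x | H3 x /\ mink x m = 0].

Definition bdry (C : set vec) : set vec :=
  [set x | C x /\ forall r, 0 < r -> exists y, H3 y /\ ~ C y /\ d2 x y < r].

(* P is the boundary of a locally finite intersection of half-spaces;
   the half-spaces are given by a set M of (spacelike) outer normals. *)
Definition convex_polyhedral_surface (P : set vec) : Prop :=
  exists M : set vec,
    (forall m, M m -> 0 < mink m m) /\
    (forall x, H3 x -> exists r, 0 < r /\
        finite_set [set m | M m /\ exists y, hplane m y /\ d2 x y < r]) /\
    P = bdry (H3 `&` \bigcap_(m in M) halfspace m).

(* geodesic convex hull in H^3 of a finite list of points *)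
Definition hull (s : seq vec) : set vec :=
  [set y | H3 y /\ exists w : 'I_(size s) -> R,
      (forall k, 0 <= w k) /\ y = \sum_(k < size s) w k *: s`_k].

Definition vertex (P : set vec) (x : vec) : Prop :=
  P x /\ ~ (exists a b, [/\ P a, P b, a <> b,
             hull [:: a; b] `<=` P & hull [:: a; b] x /\ x <> a /\ x <> b]).

(* Triangulation of the faces of P with no new vertices: a locally finite
   family of non-degenerate geodesic triangles, each contained in P (hence in
   a face), with vertices among the vertices of P, covering P, any two of
   which meet exactly along the hull of their common vertices. *)
Definition triangulation (P : set vec) (T : set (seq vec)) : Prop :=
  [/\ (forall t, T t -> [/\ size t = 3%N,
          (forall v, v \in t -> vertex P v),
          (forall a b c : R, a *: t`_0 + b *: t`_1 + c *: t`_2 = 0 ->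
              [/\ a = 0, b = 0 & c = 0]) &
          hull t `<=` P]),
      P = [set y | exists t, T t /\ hull t y],
      (forall t t', T t -> T t' ->
          hull t `&` hull t' = hull [seq v <- t | v \in t']) &
      (forall x, P x -> exists r, 0 < r /\
          finite_set [set t | T t /\ exists y, hull t y /\ d2 x y < r])].

Definition inf_isom_deformation (P : set vec) (Z : vec -> vec) : Prop :=
  exists T, triangulation P T /\
    forall t, T t -> exists X, skew X /\ forall y, hull t y -> Z y = X *m y.

(* Killing fields of Pi n: restrictions to Pi n of x |-> X x, X in so(3,1)
   with X n = 0 (i.e. tangent to Pi n). *)
Definition killing_Pi (n : vec) (X : mat) : Prop := skew X /\ X *m n = 0.

(* For x at signed distance d from Pi n,
   sinh d = mink x n, cosh d = sqrt (1 + (mink x n)^2); the projection of the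
   equidistant surface {y | mink y n = sinh d} onto Pi n is
   p_d y = (y - sinh d * n) / cosh d, whose differential on the tangent space
   of the equidistant surface is v |-> v / cosh d.  Hence
   (dp_d)^{-1} (K (p_d x)) = cosh d * K (p_d x). *)
Definition coshd (n x : vec) : R := Num.sqrt (1 + mink x n ^+ 2).
Definition proj_d (n x : vec) : vec := (coshd n x)^-1 *: (x - mink x n *: n).
Definition fuchsian_killing (n : vec) (X : mat) (x : vec) : vec :=
  coshd n x *: (X *m proj_d n x).

Definition fuchsian_deformation (n : vec) (F : set mat) (P : set vec)
    (Z : vec -> vec) : Prop :=
  inf_isom_deformation P Z /\
  forall f, F f -> exists X, killing_Pi n X /\
    forall y, P y -> Z (f *m y) = f *m (fuchsian_killing n X y + Z y).

(* vertical direction at x: tangent at x of the geodesic through x orthogonal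
   to Pi n, namely the orthogonal projection of n onto T_x H^3 *)
Definition vdir (n x : vec) : vec := n + mink n x *: x.

Definition Zvert (n : vec) (Z : vec -> vec) (x : vec) : vec :=
  (mink (Z x) (vdir n x) / mink (vdir n x) (vdir n x)) *: vdir n x.
Definition Zhor (n : vec) (Z : vec -> vec) (x : vec) : vec := Z x - Zvert n Z x.

Definition fuchsian_polyhedron (n : vec) (F : set mat) (P : set vec) : Prop :=
  [/\ mink n n = 1,
      fuchsian_group n F,
      convex_polyhedral_surface P,
      (forall f, F f -> act f P = P) &
      (forall f x, F f -> P x -> f *m x = x -> f = 1%:M)].

End Hyperbolic.

From Pilot Require Import Defs.
From HB Require Import structures.
From mathcomp Require Import all_boot all_order all_algebra.
From mathcomp Require Import all_classical all_reals.
From mathcomp Require Import ring lra.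
Set Implicit Arguments.
Unset Strict Implicit.
Import Order.TTheory GRing.Theory Num.Theory.
Local Open Scope ring_scope.
Local Open Scope classical_set_scope.

(* An element f of F maps the plane Pi onto itself, so f n is Minkowski-
   orthogonal to every point of Pi; since Pi spans the orthogonal complement
   of n, this forces f n = ±n, and then the vertical direction at f x is
   ±f applied to the vertical direction at x.  A Fuchsian Killing field is
   horizontal, so it does not contribute to the vertical component of
   Z (f x) = f (K x + Z x), and orthogonal projection onto a line commutes
   with isometries. *)

Section Minkowski.
Variable R : realType.
Implicit Types (u v w x y m n : 'cV[R]_4) (X f : 'M[R]_4).

Lemma minkE u v :
  mink u v = u 0 0 * v 0 0 + u 1 0 * v 1 0 + u 2 0 * v 2 0 - u tc 0 * v tc 0.
Proof.
rewrite /mink /Jmink mul_mx_diag mxE !big_ord_recl big_ord0 !mxE.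
have -> : lift ord0 (lift ord0 (lift ord0 ord0)) = tc :> 'I_4 by exact: val_inj.
have -> : lift ord0 (lift ord0 ord0) = 2 :> 'I_4 by exact: val_inj.
have -> : lift ord0 ord0 = 1 :> 'I_4 by exact: val_inj.
rewrite eqxx.
have -> : (ord0 == tc) = false by [].
have -> : ((1 : 'I_4) == tc) = false by [].
have -> : ((2 : 'I_4) == tc) = false by [].
ring.
Qed.

Lemma minkC u v : mink u v = mink v u.
Proof. by rewrite !minkE; ring. Qed.

Lemma minkDl u v w : mink (u + v) w = mink u w + mink v w.
Proof. by rewrite !minkE !mxE; ring. Qed.

Lemma minkDr u v w : mink w (u + v) = mink w u + mink w v.
Proof. by rewrite !minkE !mxE; ring. Qed.

Lemma minkZl a u v : mink (a *: u) v = a * mink u v.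
Proof. by rewrite !minkE !mxE; ring. Qed.

Lemma minkZr a u v : mink u (a *: v) = a * mink u v.
Proof. by rewrite !minkE !mxE; ring. Qed.

Lemma minkNl u v : mink (- u) v = - mink u v.
Proof. by rewrite !minkE !mxE; ring. Qed.

Lemma minkNr u v : mink u (- v) = - mink u v.
Proof. by rewrite !minkE !mxE; ring. Qed.

Lemma minkBl u v w : mink (u - v) w = mink u w - mink v w.
Proof. by rewrite minkDl minkNl. Qed.

Lemma minkBr u v w : mink u (v - w) = mink u v - mink u w.
Proof. by rewrite minkDr minkNr. Qed.

Lemma mink0r u : mink u 0 = 0.
Proof. by rewrite !minkE !mxE; ring. Qed.

Lemma mink_delta_tc u : mink (delta_mx tc 0) u = - u tc 0.
Proof. by rewrite minkE !mxE !andbT eqxx /=; ring. Qed.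

Lemma mink_isom f u v :
  f^T *m Jmink R *m f = Jmink R -> mink (f *m u) (f *m v) = mink u v.
Proof.
by move=> fJ; rewrite /mink trmx_mul -!mulmxA [f^T *m _]mulmxA [_ *m (f *m v)]mulmxA fJ.
Qed.

Lemma mink_skew X u v : Defs.skew X -> mink (X *m u) v = - mink u (X *m v).
Proof.
move=> skX; apply/eqP; rewrite -subr_eq0 opprK /mink.
have -> : forall A B : 'M[R]_1, A 0 0 + B 0 0 = (A + B) 0 0 by move=> A B; rewrite mxE.
have -> : (X *m u)^T *m Jmink R *m v + u^T *m Jmink R *m (X *m v)
    = u^T *m (X^T *m Jmink R + Jmink R *m X) *m v.
  by rewrite mulmxDr mulmxDl !mulmxA trmx_mul.
by rewrite skX mulmx0 mul0mx mxE.
Qed.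

Lemma mink_skew_self X u : Defs.skew X -> mink (X *m u) u = 0.
Proof. by move=> skX; have := mink_skew u u skX; rewrite [mink u _]minkC; lra. Qed.

Lemma mink_nondeg w : (forall u, mink u w = 0) -> w = 0.
Proof.
move=> w_perp; apply/matrixP => i j; rewrite (ord1 j) [RHS]mxE.
have := w_perp (delta_mx i 0).
rewrite /mink trmx_delta -mulmxA -rowE mxE /Jmink mul_diag_mx !mxE.
by case: (i == tc); rewrite ?mulN1r ?mul1r // => /eqP; rewrite oppr_eq0 => /eqP.
Qed.

Lemma hyperboloid_tc_neq0 y : mink y y = -1 -> y tc 0 != 0.
Proof. by rewrite minkE => yy; apply/eqP => y3; rewrite y3 in yy; nra. Qed.

Lemma Pi_or_Pi_opp n y : mink y y = -1 -> mink y n = 0 -> Pi n y \/ Pi n (- y).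
Proof.
move=> yy yn; have := hyperboloid_tc_neq0 yy; rewrite neq_lt => /orP [y_neg|y_pos].
  by right; split; [split|]; rewrite ?minkNl ?minkNr ?opprK ?mxE ?oppr_gt0 ?yn ?oppr0.
by left; split; [split|].
Qed.

Lemma hyperboloid_point_orthogonal n :
  mink n n = 1 -> exists y, mink y y = -1 /\ mink y n = 0.
Proof.
move=> nn; set t := n tc 0; set e : 'cV[R]_4 := delta_mx tc 0.
have ee : mink e e = -1 by rewrite mink_delta_tc mxE eqxx.
have en : mink e n = - t by rewrite mink_delta_tc.
have a_gt0 : 0 < Num.sqrt (1 + t ^+ 2) by rewrite sqrtr_gt0; have := sqr_ge0 t; lra.
have a2 : Num.sqrt (1 + t ^+ 2) ^+ 2 = 1 + t ^+ 2 by rewrite sqr_sqrtr // addr_ge0 ?sqr_ge0.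
set a := Num.sqrt _ in a_gt0 a2.
exists (a^-1 *: (e + t *: n)); rewrite !(minkZl, minkZr, minkDl, minkDr).
rewrite ee en [mink n e]minkC en nn; split; last by ring.
have -> : -1 + t * - t = - a ^+ 2 by rewrite a2; ring.
by field; exact: lt0r_neq0.
Qed.

Lemma hyperboloid_shift y v : mink y y = -1 -> mink v y = 0 ->
  exists a k, k != 0 /\ mink (a *: y + k *: v) (a *: y + k *: v) = -1.
Proof.
(* Scaling v by k keeps 1 + k^2 q >= 0 without knowing that v is spacelike. *)
move=> yy vy; set q := mink v v; set k := (1 + `|q|)^-1.
have q_ge : - `|q| <= q by rewrite lerNl -normrN ler_norm.
have k_gt0 : 0 < k by rewrite invr_gt0; have := normr_ge0 q; lra.
have kq : k * (1 + `|q|) = 1 by rewrite mulVf // gt_eqF //; have := normr_ge0 q; lra.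
have disc : 0 <= 1 + k ^+ 2 * q by have := normr_ge0 q; nra.
exists (Num.sqrt (1 + k ^+ 2 * q)), k; split; first exact: lt0r_neq0.
rewrite !(minkZl, minkZr, minkDl, minkDr) yy [mink y v]minkC vy -/q.
have := sqr_sqrtr disc; set s := Num.sqrt _; lra.
Qed.

Lemma orthogonal_Pi_parallel n m : mink n n = 1 ->
  (forall y, Pi n y -> mink y m = 0) -> m = mink n m *: n.
Proof.
move=> nn Pi_perp.
have sheets_perp y : mink y y = -1 -> mink y n = 0 -> mink y m = 0.
  move=> yy yn; case: (Pi_or_Pi_opp yy yn) => /Pi_perp //.
  by rewrite minkNl => /eqP; rewrite oppr_eq0 => /eqP.
have [y0 [y0y0 y0n]] := hyperboloid_point_orthogonal nn.
have y0m := sheets_perp _ y0y0 y0n.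
have n_perp v : mink v n = 0 -> mink v m = 0.
  move=> vn; set w := v + mink v y0 *: y0.
  have wy0 : mink w y0 = 0 by rewrite minkDl minkZl y0y0; ring.
  have wn : mink w n = 0 by rewrite minkDl minkZl vn y0n; ring.
  have wm : mink w m = mink v m by rewrite minkDl minkZl y0m; ring.
  clearbody w; rewrite -wm.
  have [a [k [k_neq0 yy]]] := hyperboloid_shift y0y0 wy0.
  have yn : mink (a *: y0 + k *: w) n = 0 by rewrite minkDl !minkZl y0n wn; ring.
  have := sheets_perp _ yy yn; rewrite minkDl !minkZl y0m mulr0 add0r.
  by move=> /eqP; rewrite mulf_eq0 (negbTE k_neq0) => /eqP.
apply/eqP; rewrite -subr_eq0; apply/eqP/mink_nondeg => u.
have := n_perp (u - mink u n *: n).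
rewrite minkBl minkZl nn mulr1 subrr => /(_ erefl).
by rewrite minkBl minkZl minkBr minkZr mulrC.
Qed.

Lemma isom_normal_line n f : mink n n = 1 -> f^T *m Jmink R *m f = Jmink R ->
  Pi n `<=` act f (Pi n) -> exists2 c, c ^+ 2 = 1 & f *m n = c *: n.
Proof.
move=> nn fJ Pi_sub.
have fn_perp y : Pi n y -> mink y (f *m n) = 0.
  by move=> /Pi_sub [z [_ zn] <-]; rewrite mink_isom.
have fn := orthogonal_Pi_parallel nn fn_perp.
exists (mink n (f *m n)) => //.
by have := mink_isom n n fJ; rewrite {1 2}fn minkZl minkZr nn mulr1 expr2.
Qed.

Definition line_proj u v := (mink u v / mink v v) *: v.

Lemma line_proj_isom f u v : f^T *m Jmink R *m f = Jmink R ->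
  line_proj (f *m u) (f *m v) = f *m line_proj u v.
Proof. by move=> fJ; rewrite /line_proj !mink_isom // scalemxAr. Qed.

Lemma line_projZr c u v : c != 0 -> line_proj u (c *: v) = line_proj u v.
Proof.
move=> c_neq0; rewrite /line_proj minkZr !minkZl minkZr scalerA.
have [->|vv_neq0] := eqVneq (mink v v) 0; first by rewrite !(mulr0, invr0, mul0r).
by congr (_ *: _); field; apply/andP.
Qed.

Lemma line_projDl u v w : mink w v = 0 -> line_proj (w + u) v = line_proj u v.
Proof. by move=> wv; rewrite /line_proj minkDl wv add0r. Qed.

Lemma vdir_isom n f x c : f^T *m Jmink R *m f = Jmink R -> c ^+ 2 = 1 ->
  f *m n = c *: n -> vdir n (f *m x) = c *: (f *m vdir n x).
Proof.
move=> fJ c2 fn.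
have n_fn : n = c *: (f *m n) by rewrite fn scalerA -expr2 c2 scale1r.
have nfx : mink n (f *m x) = c * mink n x by rewrite {1}n_fn minkZl mink_isom.
by rewrite /vdir nfx mulmxDr fn scalerDr scalerA -expr2 c2 scale1r -scalerA scalemxAr.
Qed.

Lemma coshd_gt0 n x : 0 < coshd n x.
Proof. by rewrite sqrtr_gt0; have := sqr_ge0 (mink x n); lra. Qed.

Lemma coshd_proj_d n x : x = coshd n x *: proj_d n x + mink x n *: n.
Proof. by rewrite /proj_d scalerA mulfV ?scale1r ?subrK // lt0r_neq0 ?coshd_gt0. Qed.

Lemma fuchsian_killing_horizontal n X x :
  killing_Pi n X -> mink (fuchsian_killing n X x) (vdir n x) = 0.
Proof.
move=> [skX Xn]; rewrite /fuchsian_killing /vdir.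
have := coshd_proj_d n x; set p := proj_d n x => x_dec; clearbody p.
have Xpn : mink (X *m p) n = 0 by rewrite mink_skew // Xn mink0r oppr0.
have Xpx : mink (X *m p) x = 0.
  by rewrite {1}x_dec minkDr !minkZr mink_skew_self // Xpn; ring.
by rewrite minkZl minkDr minkZr Xpn Xpx; ring.
Qed.

End Minkowski.

Theorem proposition3 (R : realType) (n : 'cV[R]_4) (F : set 'M[R]_4)
    (P : set 'cV[R]_4) (Z : 'cV[R]_4 -> 'cV[R]_4) :
  fuchsian_polyhedron n F P ->
  fuchsian_deformation n F P Z ->
  forall f x, F f -> P x -> Zvert n Z (f *m x) = f *m Zvert n Z x.
Proof.
move=> [nn [_ [_ [_ [isomF [actF _]]]]] _ _ _] [_ deformZ] f x Ff Px.
have [fJ _ _] := isomF f Ff.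
have [c c2 fn] : exists2 c, c ^+ 2 = 1 & f *m n = c *: n.
  by apply: isom_normal_line => //; rewrite actF.
have c_neq0 : c != 0 by apply: contra_eq_neq c2 => ->; rewrite expr0n eq_sym oner_neq0.
have [X [KX Zf]] := deformZ f Ff.
change (line_proj (Z (f *m x)) (vdir n (f *m x)) = f *m line_proj (Z x) (vdir n x)).
rewrite Zf // (vdir_isom x fJ c2 fn) line_projZr // line_proj_isom // line_projDl //.
exact: fuchsian_killing_horizontal.
Qed.
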